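(* Let $M=\langle n_1,n_2,n_3\rangle$ be a numerical monoid of embedding dimension three with minimal generators $n_1<n_2<n_3$. Then: (1) There exists $x\in M$ with $L(x+n_1)\neq L(x)+1$ if and only if $L(\alpha(M)n_2)\neq L(\alpha(M)n_2-n_1)+1$. (2) There exists $x\in M$ with $\ell(x+n_3)\neq \ell(x)+1$ if and only if $\ell(\beta(M)n_2)\neq \ell(\beta(M)n_2-n_3)+1$.
   Context: $\mathbb{N}$ denotes the nonnegative integers. A numerical monoid is a submonoid of $\mathbb{N}$ with finite complement. For $x\in M$, $\mathsf{Z}(x)=\{(a_1,a_2,a_3)\in\mathbb{N}^3\mid a_1n_1+a_2n_2+a_3n_3=x\}$; the length of a factorization is $a_1+a_2+a_3$; $L(x)$ and $\ell(x)$ are the maximum and minimum factorization lengths of $x$. Define $\alpha(M)=\min\{b\in\mathbb{N}\mid bn_2-n_1\in M\}$ and $\beta(M)=\min\{b\in\mathbb{N}\mid bn_2-n_3\in M\}$. *)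

From mathcomp Require Import all_boot.
Set Implicit Arguments. Unset Strict Implicit. Unset Printing Implicit Defensive.

Definition inM (n1 n2 n3 x : nat) : Prop :=
  exists a1 a2 a3, a1 * n1 + a2 * n2 + a3 * n3 = x.

(* Z(x) : all factorizations (a1,a2,a3) with a1 n1 + a2 n2 + a3 n3 = x.
   When n1,n2,n3 > 0 every coordinate of a factorization is <= x, so the
   enumeration below lists exactly the set Z(x). *)
Definition facts (n1 n2 n3 x : nat) : seq (nat * nat * nat) :=
  [seq f <- [seq (p, a3) | p <- [seq (a1, a2) | a1 <- iota 0 x.+1,
                                                  a2 <- iota 0 x.+1],
                           a3 <- iota 0 x.+1]
     | f.1.1 * n1 + f.1.2 * n2 + f.2 * n3 == x].

Definition flen (f : nat * nat * nat) : nat := f.1.1 + f.1.2 + f.2.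

Definition Lmax (n1 n2 n3 x : nat) : nat :=
  \max_(f <- facts n1 n2 n3 x) flen f.

(* l(x): minimum factorization length (the default x is an upper bound for
   all lengths when the generators are positive, and Z(x) is nonempty for x in M). *)
Definition lmin (n1 n2 n3 x : nat) : nat :=
  \big[minn/x]_(f <- facts n1 n2 n3 x) flen f.

Definition is_min_nat (P : nat -> Prop) (a : nat) : Prop :=
  P a /\ forall b, P b -> a <= b.

(* alpha(M) = min { b | b n2 - n1 in M }  (integer subtraction, so b n2 >= n1) *)
Definition alphaM (n1 n2 n3 a : nat) : Prop :=
  is_min_nat (fun b => n1 <= b * n2 /\ inM n1 n2 n3 (b * n2 - n1)) a.

Definition betaM (n1 n2 n3 a : nat) : Prop :=
  is_min_nat (fun b => n3 <= b * n2 /\ inM n1 n2 n3 (b * n2 - n3)) a.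

(* <n1,n2,n3> is a numerical monoid (finite complement in N) with minimal
   generating set {n1,n2,n3} of size three, n1 < n2 < n3. *)
Definition emb_dim3 (n1 n2 n3 : nat) : Prop :=
  [/\ 0 < n1, n1 < n2, n2 < n3 &
      exists F, forall x, F <= x -> inM n1 n2 n3 x] /\
  [/\ ~ (exists a b, a * n2 + b * n3 = n1),
      ~ (exists a b, a * n1 + b * n3 = n2)
    & ~ (exists a b, a * n1 + b * n2 = n3)].

(* Adding a generator raises L by at least one and l by at most one, so for
   (1) it remains to show L (x + n1) <= L x + 1 for every x in M when the
   equality holds at alpha n2.  We argue by strong induction on x, looking at
   a factorization (f1, f2, f3) of x + n1.  If f1 > 0, drop one n1.  If
   f2 >= alpha, replacing alpha copies of n2 by a longest factorization of
   alpha n2 - n1 gives a factorization of x, and by hypothesis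
   L (alpha n2 - n1) = L (alpha n2) - 1 >= alpha - 1.  Otherwise f1 = 0 and
   f2 < alpha, so f3 > 0 by minimality of alpha.  A factorization of x
   avoiding n3 then yields a factorization of x + n1 over n1, n2 longer than
   f2 + f3, while one using n3 lets the induction hypothesis act on x - n3.
   Part (2) is the mirror image, exchanging n1 with n3 and L with l; the
   converse implications are the instances x = alpha n2 - n1 and
   x = beta n2 - n3. *)

From mathcomp Require Import all_boot zify.

Set Implicit Arguments.
Unset Strict Implicit.
Unset Printing Implicit Defensive.

Lemma big_selective_attained (I : eqType) (op : nat -> nat -> nat) idx
    (r : seq I) (F : I -> nat) :
  (forall m n, op m n = m \/ op m n = n) ->
  \big[op/idx]_(i <- r) F i = idx \/
  exists2 i, i \in r & F i = \big[op/idx]_(i <- r) F i.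
Proof.
move=> op_sel; rewrite big_seq.
apply: (big_ind (fun v => v = idx \/ exists2 i, i \in r & F i = v)) => //.
- by left.
- by move=> m n Km Kn; case: (op_sel m n) => ->.
- by move=> i ri; right; exists i.
Qed.

Lemma bigminn_leq_seq (I : eqType) (r : seq I) d (F : I -> nat) i :
  i \in r -> \big[minn/d]_(j <- r) F j <= F i.
Proof.
elim: r => [//|j r IHr]; rewrite inE big_cons => /predU1P [-> | /IHr].
  exact: geq_minl.
exact: leq_trans (geq_minr _ _).
Qed.

Lemma inM_add n1 n2 n3 x y :
  inM n1 n2 n3 x -> inM n1 n2 n3 y -> inM n1 n2 n3 (x + y).
Proof.
case=> a1 [a2 [a3 Ea]] [b1 [b2 [b3 Eb]]].
by exists (a1 + b1), (a2 + b2), (a3 + b3); nia.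
Qed.

Section Factorizations.

Variables n1 n2 n3 : nat.
Hypotheses (n1_gt0 : 0 < n1) (n2_gt0 : 0 < n2) (n3_gt0 : 0 < n3).

Local Notation inM := (inM n1 n2 n3).
Local Notation L := (Lmax n1 n2 n3).
Local Notation l := (lmin n1 n2 n3).

Lemma mem_facts x a1 a2 a3 :
  ((a1, a2, a3) \in facts n1 n2 n3 x) = (a1 * n1 + a2 * n2 + a3 * n3 == x).
Proof.
rewrite mem_filter [X in X && _]/=; case: eqP => // Ex.
apply: (allpairs_f (fun p a => (p, a))); last by rewrite mem_iota; nia.
by apply: (allpairs_f pair); rewrite mem_iota; nia.
Qed.

Lemma leq_Lmax x a1 a2 a3 :
  a1 * n1 + a2 * n2 + a3 * n3 = x -> a1 + a2 + a3 <= L x.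
Proof.
move=> Ex; apply: (@leq_bigmax_seq _ _ _ flen (a1, a2, a3)) => //.
by rewrite mem_facts Ex.
Qed.

Lemma lmin_leq x a1 a2 a3 :
  a1 * n1 + a2 * n2 + a3 * n3 = x -> l x <= a1 + a2 + a3.
Proof.
move=> Ex; apply: (@bigminn_leq_seq _ _ _ flen (a1, a2, a3)).
by rewrite mem_facts Ex.
Qed.

Lemma Lmax_attained x : inM x -> exists a1 a2 a3,
  a1 * n1 + a2 * n2 + a3 * n3 = x /\ a1 + a2 + a3 = L x.
Proof.
case=> b1 [b2 [b3 Eb]].
have maxn_sel m n : maxn m n = m \/ maxn m n = n.
  by rewrite /maxn; case: ltnP; auto.
have [L0 | [[[a1 a2] a3]]] :=
  big_selective_attained 0 (facts n1 n2 n3 x) flen maxn_sel.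
  by exists b1, b2, b3; split=> //; move: (leq_Lmax Eb); rewrite /Lmax L0; lia.
by rewrite mem_facts => /eqP Ea La; exists a1, a2, a3.
Qed.

Lemma lmin_attained x : inM x -> exists a1 a2 a3,
  a1 * n1 + a2 * n2 + a3 * n3 = x /\ a1 + a2 + a3 = l x.
Proof.
case=> b1 [b2 [b3 Eb]].
have minn_sel m n : minn m n = m \/ minn m n = n.
  by rewrite /minn; case: ltnP; auto.
have [lx | [[[a1 a2] a3]]] :=
  big_selective_attained x (facts n1 n2 n3 x) flen minn_sel.
  by exists b1, b2, b3; split=> //; move: (lmin_leq Eb); rewrite /lmin lx; nia.
by rewrite mem_facts => /eqP Ea la; exists a1, a2, a3.
Qed.

Lemma Lmax_superadditive x y : inM x -> inM y -> L x + L y <= L (x + y).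
Proof.
move=> /Lmax_attained [a1 [a2 [a3 [Ea <-]]]].
move=> /Lmax_attained [b1 [b2 [b3 [Eb <-]]]].
have : (a1 + b1) + (a2 + b2) + (a3 + b3) <= L (x + y) by apply: leq_Lmax; nia.
lia.
Qed.

Lemma lmin_subadditive x y : inM x -> inM y -> l (x + y) <= l x + l y.
Proof.
move=> /lmin_attained [a1 [a2 [a3 [Ea <-]]]].
move=> /lmin_attained [b1 [b2 [b3 [Eb <-]]]].
have : l (x + y) <= (a1 + b1) + (a2 + b2) + (a3 + b3) by apply: lmin_leq; nia.
lia.
Qed.

End Factorizations.

Section Ordered.

Variables n1 n2 n3 : nat.
Hypotheses (n1_gt0 : 0 < n1) (n1_lt_n2 : n1 < n2) (n2_lt_n3 : n2 < n3).

Let n2_gt0 : 0 < n2. Proof. exact: ltn_trans n1_lt_n2. Qed.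
Let n3_gt0 : 0 < n3. Proof. exact: ltn_trans n2_lt_n3. Qed.

Local Notation inM := (inM n1 n2 n3).
Local Notation L := (Lmax n1 n2 n3).
Local Notation l := (lmin n1 n2 n3).

Lemma fact23_shorter_than_fact12 a b c d :
  a * n1 + b * n2 = c * n2 + d * n3 -> 0 < a -> c + d < a + b.
Proof.
move=> E a_gt0; rewrite -(ltn_pmul2r n2_gt0).
have : a * n1 < a * n2 by rewrite ltn_pmul2l.
have : d * n2 <= d * n3 by rewrite leq_mul2l ltnW ?orbT.
rewrite !mulnDl; lia.
Qed.

Lemma inM_n1 : inM n1. Proof. by exists 1, 0, 0; lia. Qed.
Lemma inM_n3 : inM n3. Proof. by exists 0, 0, 1; lia. Qed.

Lemma Lmax_addn1_gt x : inM x -> L x < L (x + n1).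
Proof.
move=> Mx; have : 1 + 0 + 0 <= L n1 by apply: leq_Lmax; lia.
have := Lmax_superadditive n1_gt0 n2_gt0 n3_gt0 Mx inM_n1; lia.
Qed.

Lemma Lmax_addn3_gt x : inM x -> L x < L (x + n3).
Proof.
move=> Mx; have : 0 + 0 + 1 <= L n3 by apply: leq_Lmax; lia.
have := Lmax_superadditive n1_gt0 n2_gt0 n3_gt0 Mx inM_n3; lia.
Qed.

Lemma lmin_addn1_le x : inM x -> l (x + n1) <= l x + 1.
Proof.
move=> Mx; have : l n1 <= 1 + 0 + 0 by apply: lmin_leq; lia.
have := lmin_subadditive n1_gt0 n2_gt0 n3_gt0 Mx inM_n1; lia.
Qed.

Lemma lmin_addn3_le x : inM x -> l (x + n3) <= l x + 1.
Proof.
move=> Mx; have : l n3 <= 0 + 0 + 1 by apply: lmin_leq; lia.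
have := lmin_subadditive n1_gt0 n2_gt0 n3_gt0 Mx inM_n3; lia.
Qed.

Section Alpha.

Variable a : nat.
Hypotheses (alpha_a : alphaM n1 n2 n3 a)
  (L_alpha : L (a * n2) = L (a * n2 - n1) + 1).

Lemma Lmax_trade_alpha x f2 f3 :
  f2 * n2 + f3 * n3 = x + n1 -> a <= f2 -> f2 + f3 <= L x + 1.
Proof.
move=> + le_a_f2; move: (f2 - a) (subnKC le_a_f2) => d <- Ef.
have [[le_n1 Mr] _] := alpha_a.
have Md : inM (d * n2 + f3 * n3) by exists 0, d, f3; lia.
have : 0 + d + f3 <= L (d * n2 + f3 * n3) by apply: leq_Lmax; lia.
have : 0 + a + 0 <= L (a * n2) by apply: leq_Lmax; lia.
have := Lmax_superadditive n1_gt0 n2_gt0 n3_gt0 Mr Md.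
have -> : a * n2 - n1 + (d * n2 + f3 * n3) = x by rewrite mulnDl in Ef; lia.
lia.
Qed.

Lemma Lmax_addn1_le x : inM x -> L (x + n1) <= L x + 1.
Proof.
elim/ltn_ind: x => x IH Mx.
have [f1 [f2 [f3 [Ef <-]]]] :=
  Lmax_attained n1_gt0 n2_gt0 n3_gt0 (inM_add Mx inM_n1).
case: f1 Ef => [|f1] Ef; last first.
  have : f1 + f2 + f3 <= L x by apply: leq_Lmax; lia.
  lia.
have [le_a_f2 | lt_f2_a] := leqP a f2.
  by apply: Lmax_trade_alpha le_a_f2; lia.
case: f3 Ef => [|f3] Ef.
  have [_ /(_ f2) a_min] := alpha_a.
  suff : a <= f2 by lia.
  by apply: a_min; rewrite (_ : f2 * n2 - n1 = x); [split=> //; lia | lia].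
have [g1 [g2 [g3 Eg]]] := Mx.
case: g3 Eg => [|g3] Eg.
  have : f2 + f3.+1 < g1.+1 + g2 by apply: fact23_shorter_than_fact12; lia.
  have : g1 + g2 + 0 <= L x by apply: leq_Lmax; lia.
  lia.
have Mx' : inM (x - n3) by exists g1, g2, g3; nia.
have := IH (x - n3) _ Mx'.
have : 0 + f2 + f3 <= L (x - n3 + n1) by apply: leq_Lmax; nia.
have := Lmax_addn3_gt Mx'; rewrite subnK; nia.
Qed.

Lemma Lmax_addn1_eq x : inM x -> L (x + n1) = L x + 1.
Proof.
by move=> Mx; apply/anti_leq; rewrite Lmax_addn1_le // addn1 Lmax_addn1_gt.
Qed.

End Alpha.

Section Beta.

Variable b : nat.
Hypotheses (beta_b : betaM n1 n2 n3 b)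
  (l_beta : l (b * n2) = l (b * n2 - n3) + 1).

Lemma lmin_trade_beta x f1 f2 :
  f1 * n1 + f2 * n2 = x + n3 -> b <= f2 -> l x < f1 + f2.
Proof.
move=> + le_b_f2; move: (f2 - b) (subnKC le_b_f2) => d <- Ef.
have [[le_n3 Mr] _] := beta_b.
have Md : inM (f1 * n1 + d * n2) by exists f1, d, 0; lia.
have : l (f1 * n1 + d * n2) <= f1 + d + 0 by apply: lmin_leq; lia.
have : l (b * n2) <= 0 + b + 0 by apply: lmin_leq; lia.
have := lmin_subadditive n1_gt0 n2_gt0 n3_gt0 Mr Md.
have -> : b * n2 - n3 + (f1 * n1 + d * n2) = x by rewrite mulnDl in Ef; lia.
lia.
Qed.

Lemma lmin_addn3_gt x : inM x -> l x < l (x + n3).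
Proof.
elim/ltn_ind: x => x IH Mx.
have [f1 [f2 [f3 [Ef <-]]]] :=
  lmin_attained n1_gt0 n2_gt0 n3_gt0 (inM_add Mx inM_n3).
case: f3 Ef => [|f3] Ef; last first.
  have : l x <= f1 + f2 + f3 by apply: lmin_leq; lia.
  lia.
have [le_b_f2 | lt_f2_b] := leqP b f2.
  by rewrite addn0; apply: lmin_trade_beta le_b_f2; lia.
case: f1 Ef => [|f1] Ef.
  have [_ /(_ f2) b_min] := beta_b.
  suff : b <= f2 by lia.
  by apply: b_min; rewrite (_ : f2 * n2 - n3 = x); [split=> //; lia | lia].
have [g1 [g2 [g3 Eg]]] := Mx.
case: g1 Eg => [|g1] Eg.
  have : g2 + g3.+1 < f1.+1 + f2 by apply: fact23_shorter_than_fact12; lia.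
  have : l x <= 0 + g2 + g3 by apply: lmin_leq; lia.
  lia.
have Mx' : inM (x - n1) by exists g1, g2, g3; nia.
have := IH (x - n1) _ Mx'.
have : l (x - n1 + n3) <= f1 + f2 + 0 by apply: lmin_leq; nia.
have := lmin_addn1_le Mx'; rewrite subnK; nia.
Qed.

Lemma lmin_addn3_eq x : inM x -> l (x + n3) = l x + 1.
Proof.
by move=> Mx; apply/anti_leq; rewrite lmin_addn3_le // addn1 lmin_addn3_gt.
Qed.

End Beta.

End Ordered.

Theorem mainTheorem5 (n1 n2 n3 a b : nat) :
  emb_dim3 n1 n2 n3 -> alphaM n1 n2 n3 a -> betaM n1 n2 n3 b ->
  ((exists x, inM n1 n2 n3 x /\
      Lmax n1 n2 n3 (x + n1) <> Lmax n1 n2 n3 x + 1)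
   <-> Lmax n1 n2 n3 (a * n2) <> Lmax n1 n2 n3 (a * n2 - n1) + 1)
  /\
  ((exists x, inM n1 n2 n3 x /\
      lmin n1 n2 n3 (x + n3) <> lmin n1 n2 n3 x + 1)
   <-> lmin n1 n2 n3 (b * n2) <> lmin n1 n2 n3 (b * n2 - n3) + 1).
Proof.
move=> [[n1_gt0 n1_lt_n2 n2_lt_n3 _] _] alpha_a beta_b.
have [[le_n1 Ma] _] := alpha_a; have [[le_n3 Mb] _] := beta_b.
split; split.
- move=> [x [Mx neq]] L_alpha; apply: neq.
  exact: (Lmax_addn1_eq n1_gt0 n1_lt_n2 n2_lt_n3 alpha_a L_alpha Mx).
- by exists (a * n2 - n1); rewrite subnK.
- move=> [x [Mx neq]] l_beta; apply: neq.
  exact: (lmin_addn3_eq n1_gt0 n1_lt_n2 n2_lt_n3 beta_b l_beta Mx).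
- by exists (b * n2 - n3); rewrite subnK.
Qed.
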